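(* In the category of groups, with $0$ the trivial group, a finite group $H$ is nilpotent iff the diagonal homomorphism $H\to H\times H$, $h\mapsto(h,h)$, lies in $\{0\to G:\ G\text{ an arbitrary group}\}^{lr}$.
   Context: For morphisms $f:A\to B$ and $g:X\to Y$ in a category, write $f\rightthreetimes g$ (''$f$ has the left lifting property with respect to $g$'') if for all morphisms $i:A\to X$, $j:B\to Y$ with $g\circ i=j\circ f$ there exists a morphism $h:B\to X$ with $h\circ f=i$ and $g\circ h=j$. For a class $C$ of morphisms, $C^l=\{f:\ f\rightthreetimes g\text{ for all }g\in C\}$ and $C^r=\{g:\ f\rightthreetimes g\text{ for all }f\in C\}$; $C^{lr}=(C^l)^r$. *)

From HB Require Import structures.
From mathcomp Require Import all_boot all_fingroup all_solvable.
Set Implicit Arguments. Unset Strict Implicit. Unset Printing Implicit Defensive.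

Record Grp := MkGrp {
  carrier :> Type;
  gmul : carrier -> carrier -> carrier;
  gone : carrier;
  ginv : carrier -> carrier;
  gmulA : forall x y z, gmul x (gmul y z) = gmul (gmul x y) z;
  gmul1 : forall x, gmul gone x = x;
  gmulV : forall x, gmul (ginv x) x = gone
}.

Definition is_hom (A B : Grp) (f : A -> B) : Prop :=
  forall x y, f (gmul x y) = gmul (f x) (f y).

Definition mclass := forall A B : Grp, (A -> B) -> Prop.

(* f ⧄ g : f has the left lifting property w.r.t. g (equality of morphisms
   is equality of underlying functions, stated pointwise). *)
Definition llp (A B X Y : Grp) (f : A -> B) (g : X -> Y) : Prop :=
  forall (i : A -> X) (j : B -> Y), is_hom i -> is_hom j ->
    (forall a, g (i a) = j (f a)) ->
    exists h : B -> X, is_hom h /\ (forall a, h (f a) = i a) /\ (forall b, g (h b) = j b).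

Definition lorth (C : mclass) : mclass :=
  fun A B f => is_hom f /\ forall (X Y : Grp) (g : X -> Y), C X Y g -> llp f g.

Definition rorth (C : mclass) : mclass :=
  fun X Y g => is_hom g /\ forall (A B : Grp) (f : A -> B), C A B f -> llp f g.

Definition unitGrp : Grp :=
  @MkGrp unit (fun _ _ => tt) tt (fun _ => tt)
    (fun _ _ _ => erefl) (fun x => match x with tt => erefl end) (fun _ => erefl).

Inductive C0 : mclass :=
  | C0_intro (G : Grp) : C0 (fun _ : unitGrp => gone G).

Definition prodGrp (A B : Grp) : Grp.
Proof.
refine (@MkGrp (A * B)%type
  (fun x y => (gmul x.1 y.1, gmul x.2 y.2)) (gone A, gone B)
  (fun x => (ginv x.1, ginv x.2)) _ _ _).
- by move=> [? ?] [? ?] [? ?] /=; rewrite !gmulA.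
- by move=> [? ?] /=; rewrite !gmul1.
- by move=> [? ?] /=; rewrite !gmulV.
Defined.

Definition grp_of_fin (gT : finGroupType) : Grp :=
  @MkGrp gT (@mulg gT) 1%g (@invg gT) (@mulgA gT) (@mul1g gT) (@mulVg gT).

Definition diag (G : Grp) : G -> prodGrp G G := fun h => (h, h).

From mathcomp Require Import all_boot all_fingroup all_solvable.
From mathcomp Require Import boolp.
Set Implicit Arguments. Unset Strict Implicit. Unset Printing Implicit Defensive.

(* A map lies in {0 -> G}^l exactly when every homomorphism killing its image
   is trivial, and the diagonal of H is right orthogonal to such a map f iff
   every homomorphism into H x H which is diagonal on the image of f is
   diagonal everywhere.

   If H is nilpotent and f : A -> B is in {0 -> G}^l, let j : B -> H x H be
   diagonal on the image of f and D the subgroup generated by the image of j.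
   If D were not inside the diagonal, the proper subgroup D /\ diagonal would
   lie in a proper normal subgroup M of the nilpotent group D; then B -> D/M
   kills f, hence is trivial, so D = M, a contradiction.

   If H is not nilpotent, it has a normal subgroup M <> 1 with M <= [M, H].
   The group B = {(a, b) | a^-1 b in M} is normally generated by the diagonal
   copy of H, since (1, [m, x]) = [(1, m), (x, x)] and these elements generate
   1 x M.  So H -> B, a |-> (a, a), is in {0 -> G}^l, and lifting along the
   diagonal of H the inclusion B -> H x H forces M = 1. *)

Section GrpTheory.
Variable G : Grp.

Lemma gmulVr (x : G) : gmul x (ginv x) = gone G.
Proof.
rewrite -[gmul x _]gmul1 -(gmulV (ginv x)) -gmulA [gmul (ginv x) (gmul x _)]gmulA.
by rewrite gmulV gmul1 gmulV.
Qed.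

Lemma gmulr1 (x : G) : gmul x (gone G) = x.
Proof. by rewrite -(gmulV x) gmulA gmulVr gmul1. Qed.

Lemma gmulI (x y z : G) : gmul x y = gmul x z -> y = z.
Proof. by move=> e; rewrite -(gmul1 y) -(gmulV x) -gmulA e gmulA gmulV gmul1. Qed.

End GrpTheory.

Lemma hom1 (A B : Grp) (f : A -> B) : is_hom f -> f (gone A) = gone B.
Proof. by move=> hf; apply: (@gmulI _ (f (gone A))); rewrite -hf gmul1 gmulr1. Qed.

Lemma lorth_C0P (A B : Grp) (f : A -> B) :
  lorth C0 f <->
  is_hom f /\ forall (X : Grp) (j : B -> X), is_hom j ->
    (forall a, j (f a) = gone X) -> forall b, j b = gone X.
Proof.
split=> [[hf fC0] | [hf kill]]; split=> //.
  move=> X j hj jf b.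
  have sq a : gone X = j (f a) by rewrite jf.
  by have [h [_ [_ <-]]] :=
    fC0 _ _ _ (C0_intro X) (fun _ => tt) j (fun _ _ => erefl) hj sq.
move=> X Y g [] Z i j _ hj sq.
exists (fun _ => tt); split=> //; split=> [a | b]; first by case: (i a).
by rewrite (kill _ _ hj) // => a; rewrite -sq.
Qed.

Lemma lorth_C0_hom (A B : Grp) (f : A -> B) : lorth C0 f -> is_hom f.
Proof. by case. Qed.

Lemma rorth_diagP (C : mclass) (G : Grp) :
  (forall (A B : Grp) (f : A -> B), C A B f -> is_hom f) ->
  rorth C (@diag G) <->
  forall (A B : Grp) (f : A -> B) (j : B -> prodGrp G G), C A B f -> is_hom j ->
    (forall a, (j (f a)).1 = (j (f a)).2) -> forall b, (j b).1 = (j b).2.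
Proof.
move=> homC; split=> [[_ diagC] A B f j Cf hj jf b | diagC].
  have hi : is_hom (fun a => (j (f a)).1) by move=> x y; rewrite (homC _ _ _ Cf) hj.
  have [|h [_ [_ hh]]] := diagC _ _ _ Cf _ j hi hj.
    by move=> a; rewrite /diag {2}jf; case: (j (f a)).
  by rewrite -hh.
split=> [// | A B f Cf i j _ hj sq].
exists (fun b => (j b).1); split; first by move=> x y; rewrite hj.
have jf a : (j (f a)).1 = (j (f a)).2 by rewrite -sq.
split=> [a | b]; first by rewrite -sq.
by rewrite /diag {2}(diagC _ _ _ _ Cf hj jf b); case: (j b).
Qed.

Local Open Scope group_scope.

Lemma nilpotent_setX (gT1 gT2 : finGroupType) :
  nilpotent [set: gT1] -> nilpotent [set: gT2] -> nilpotent [set: gT1 * gT2].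
Proof.
move=> nil1 nil2.
have -> : [set: gT1 * gT2] = setX [set: gT1] [set: gT2] by apply/setP => x; rewrite !inE.
rewrite (dprod_nil (setX_dprod [set: gT1]%G [set: gT2]%G)).
by rewrite -(isog_nil (isog_setX1 _ _)) -(isog_nil (isog_set1X _ _)) nil1.
Qed.

Lemma nilpotent_proper_sub_normal (gT : finGroupType) (G H : {group gT}) :
  nilpotent G -> H \proper G ->
  exists2 M : {group gT}, H \subset M & (M \proper G) && (M <| G).
Proof.
move=> nilG prHG.
have [M /maxgroupP [/= prMG maxM] sHM] :=
  maxgroup_exists (gP := [pred M : {group gT} | M \proper G]) prHG.
exists M; rewrite // prMG /normal proper_sub //=.
have prMN := nilpotent_proper_norm nilG prMG.
have [prNG | ] := boolP ('N_G(M) \proper G).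
  have eqNM := maxM 'N_G(M)%G prNG (proper_sub prMN).
  by rewrite eqNM properxx in prMN.
by rewrite properE subsetIl negbK => /subset_trans; apply; apply: subsetIr.
Qed.

Lemma lorth_C0_nilpotent_sub (A B : Grp) (f : A -> B) (rT : finGroupType)
    (L : {group rT}) (j : B -> grp_of_fin rT) :
  lorth C0 f -> is_hom j -> nilpotent [set: rT] ->
  (forall a, j (f a) \in L) -> forall b, j b \in L.
Proof.
move=> /lorth_C0P [_ kill] hj nilT jfL b.
pose D := <<[set x | `[< exists b, j b = x >]]>>%G.
have jD b' : j b' \in D by apply: mem_gen; rewrite inE; apply/asboolP; exists b'.
suff sDL : D \subset L by apply: (subsetP sDL).
apply: contraT => nsDL.
have prDL : D :&: L \proper D by rewrite properE subsetIl subsetI subxx.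
have [M sDLM /andP [prMD nsMD]] :=
  nilpotent_proper_sub_normal (nilpotentS (subsetT D) nilT) prDL.
have nMj b' : j b' \in 'N(M) by apply: (subsetP (normal_norm nsMD)).
pose phi (b' : B) : grp_of_fin (coset_of M) := coset M (j b').
have hphi : is_hom phi by move=> x y; rewrite /phi hj /= morphM.
have phi1 : forall b', phi b' = 1.
  by apply: kill hphi _ => a; apply/coset_id/(subsetP sDLM); rewrite inE jD jfL.
suff : D \subset M by move: prMD; rewrite properE => /andP [_ /negP].
rewrite gen_subG; apply/subsetP => _ /[1!inE] /asboolP [b' <-].
exact: coset_idr (nMj b') (phi1 b').
Qed.

Lemma not_nilpotent_comm_normal (gT : finGroupType) :
  ~~ nilpotent [set: gT] ->
  exists2 M : {group gT}, M :!=: 1 &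
    ([set: gT] \subset 'N(M)) && (M \subset [~: M, [set: gT]]).
Proof.
case/forall_inPn => N; rewrite unfold_in /= subsetI subsetT /= => sN ntN.
exists [~: N, [set: gT]]%G; last by rewrite commg_normr commSg.
by apply: contraNneq ntN => N1; rewrite -subG1 -N1.
Qed.

Section HomKernel.
Variables (T : finGroupType) (X : Grp) (j : grp_of_fin T -> X).
Hypothesis hj : is_hom j.

Definition hom_ker : {set T} := [set x | `[< j x = gone X >]].

Lemma hom_kerP x : reflect (j x = gone X) (x \in hom_ker).
Proof. by rewrite inE; apply: asboolP. Qed.

Lemma hom_ker_group_set : group_set hom_ker.
Proof.
apply/group_setP; split=> [|x y /hom_kerP jx /hom_kerP jy]; apply/hom_kerP.
  exact: (hom1 hj).
by rewrite [j _]hj jx jy gmul1.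
Qed.

Canonical hom_ker_group := Group hom_ker_group_set.

Lemma hom_ker_norm : [set: T] \subset 'N(hom_ker).
Proof.
apply/subsetP => x _; rewrite inE; apply/subsetP => _ /imsetP [y /hom_kerP jy ->].
apply/hom_kerP; rewrite conjgE (hj x^-1 (y * x)) (hj y x) jy gmul1 -hj /= mulVg.
exact: (hom1 hj).
Qed.

Lemma hom_ker_commg x y : y \in hom_ker -> [~ x, y] \in hom_ker.
Proof.
move=> ky; rewrite commgEr groupM // memJ_norm ?groupV //.
by apply: (subsetP hom_ker_norm).
Qed.

End HomKernel.

Section DiagonalFibre.
Variables (gT : finGroupType) (M : {group gT}).
Hypothesis nM : [set: gT] \subset 'N(M).

Definition fibre_set : {set gT * gT} := [set p | p.1^-1 * p.2 \in M].

Lemma fibre_group_set : group_set fibre_set.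
Proof.
apply/group_setP; split=> [|[a b] [c d]]; rewrite !inE /= ?mulVg // => Mab Mcd.
have -> : (a * c)^-1 * (b * d) = (a^-1 * b) ^ c * (c^-1 * d).
  by rewrite conjgE invMg !mulgA mulgK.
by rewrite groupM // memJ_norm // (subsetP nM).
Qed.

Canonical fibre_group := Group fibre_group_set.

Definition fibre_diag (a : gT) : subg_of fibre_group := subg fibre_group (a, a).
Definition fibre_snd (m : gT) : subg_of fibre_group := subg fibre_group (1, m).

Lemma diag_in_fibre a : (a, a) \in fibre_group.
Proof. by rewrite inE mulVg. Qed.

Lemma snd_in_fibre m : ((1, m) \in fibre_group) = (m \in M).
Proof. by rewrite inE /= invg1 mul1g. Qed.

Lemma fibre_snd1 : fibre_snd 1 = 1.
Proof. exact: (morph1 (subg_morphism fibre_group)). Qed.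

Lemma fibre_sndM : {in M &, {morph fibre_snd : m n / m * n}}.
Proof.
move=> m n Mm Mn; rewrite -morphM ?snd_in_fibre //.
by rewrite -[(1, m) * _]/(1 * 1, m * n) mulg1.
Qed.

Lemma fibre_snd_commg m x :
  m \in M -> fibre_snd [~ m, x] = [~ fibre_snd m, fibre_diag x].
Proof.
move=> Mm; rewrite -morphR ?snd_in_fibre ?diag_in_fibre //.
by rewrite /fibre_snd -[[~ (1, m), _]]/([~ 1, x], [~ m, x]) comm1g.
Qed.

Lemma fibre_diag_snd (u : subg_of fibre_group) :
  u = fibre_diag (val u).1 * fibre_snd ((val u).1^-1 * (val u).2).
Proof.
have Mu : (val u).1^-1 * (val u).2 \in M by have := subgP u; rewrite inE.
rewrite -subgM ?diag_in_fibre ?snd_in_fibre // -[in LHS](sgvalK u).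
congr subg; rewrite -[sgval u]/(val u); case: (val u) => a b.
by rewrite -[_ * _]/(a * 1, a * (a^-1 * b)) mulg1 mulKVg.
Qed.

Lemma lorth_C0_fibre_diag :
  M \subset [~: M, [set: gT]] ->
  lorth C0 (fibre_diag : grp_of_fin gT -> grp_of_fin (subg_of fibre_group)).
Proof.
move=> sMR; apply/lorth_C0P; split=> [x y | X j hj jdiag].
  by rewrite /= /fibre_diag -subgM ?diag_in_fibre.
have kdiag a : fibre_diag a \in hom_ker j by apply/hom_kerP.
pose K := [set m in M | fibre_snd m \in hom_ker j].
have gK : group_set K.
  apply/group_setP; split=> [|m n /setIdP [Mm km] /setIdP [Mn kn]].
    by rewrite inE group1 fibre_snd1 group1.
  by rewrite inE groupM //= fibre_sndM // groupM.
have sMK : M \subset Group gK.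
  apply: subset_trans sMR _; rewrite gen_subG.
  apply/subsetP => _ /imset2P [m x Mm _ ->].
  have Mmx : [~ m, x] \in M by rewrite groupM ?groupV // memJ_norm ?(subsetP nM).
  by rewrite inE Mmx fibre_snd_commg // hom_ker_commg.
move=> u; apply/hom_kerP; rewrite (fibre_diag_snd u) groupM //.
have := subgP u; rewrite inE => Mu.
by have /setIdP [] := subsetP sMK _ Mu.
Qed.

Lemma rorth_diag_fibre_trivial :
  rorth (lorth C0) (@diag (grp_of_fin gT)) -> M \subset [~: M, [set: gT]] -> M :=: 1.
Proof.
move=> /(@rorth_diagP _ _ (@lorth_C0_hom)) diagC sMR; apply/trivgP/subsetP => m Mm.
pose incl (u : grp_of_fin (subg_of fibre_group)) :
  prodGrp (grp_of_fin gT) (grp_of_fin gT) := val u.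
have incl_diag a : (incl (fibre_diag a)).1 = (incl (fibre_diag a)).2.
  by rewrite /incl subgK ?diag_in_fibre.
have := diagC _ _ _ incl (lorth_C0_fibre_diag sMR) (fun _ _ => erefl) incl_diag.
move=> /(_ (fibre_snd m)).
by rewrite /incl subgK ?snd_in_fibre //= => <-; rewrite inE.
Qed.

End DiagonalFibre.

Theorem claim1 (gT : finGroupType) :
  nilpotent [set: gT] <->
  rorth (lorth C0) (@diag (grp_of_fin gT)).
Proof.
split=> [nilT | diagC].
  apply/(@rorth_diagP _ _ (@lorth_C0_hom)) => A B f j fC0 hj jf b; apply/eqP.
  pose L := [set p : gT * gT | p.1 == p.2].
  have gL : group_set L.
    by apply/group_setP; split=> [|[a a'] [c c']]; rewrite !inE //= => /eqP-> /eqP->.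
  have := lorth_C0_nilpotent_sub (L := Group gL) fC0 hj (nilpotent_setX nilT nilT).
  by move=> /(_ _ b); rewrite inE; apply=> a; rewrite inE jf.
apply: contraT => /not_nilpotent_comm_normal [M ntM /andP [nM sMR]].
by rewrite (rorth_diag_fibre_trivial nM diagC sMR) eqxx in ntM.
Qed.
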